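(* If $A$ is a three-dimensional periodic Costas array, then $A$ has order $4$.
   Context: For $n\in\mathbb{N}$, $[n]=\{1,\dots,n\}$. A three-dimensional permutation array is a binary array $A:[n_1]\times[n_2]\times[n_3]\to\{0,1\}$ (all $n_i\ge2$) for which there is either a bijection $\varphi:[n_1]\times[n_2]\to[n_3]$ with $A(a_1,a_2,a_3)=1$ iff $\varphi(a_1,a_2)=a_3$, or a bijection $\varphi:[n_1]\to[n_2]\times[n_3]$ with $A(a_1,a_2,a_3)=1$ iff $\varphi(a_1)=(a_2,a_3)$; points with value 1 are dots and the order is the number of dots. The difference vector from dot $(a_1,a_2,a_3)$ to a distinct dot $(w_1,w_2,w_3)$ is $\langle w_1-a_1,w_2-a_2,w_3-a_3\rangle\in\mathbb{Z}^3$. A three-dimensional Costas array is a permutation array in which no two distinct ordered pairs of distinct dots have the same difference vector. The periodic extension $\mathbb{A}:\mathbb{Z}^3\to\{0,1\}$ is $\mathbb{A}(a_1,a_2,a_3)=A(a_1',a_2',a_3')$ with $a_i'\in[n_i]$, $a_i'\equiv a_i\pmod{n_i}$. A Costas array is periodic Costas if for every box $W=\prod_{i=1}^3\{k_i,\dots,k_i+n_i-1\}$ ($k_i\in\mathbb{Z}$), no two distinct ordered pairs of distinct points of $W$ where $\mathbb{A}=1$ have the same difference vector. *)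

(* Coordinates [n] = {1..n} are represented 0-based by 'I_n
   (a uniform shift, irrelevant for difference vectors and periodicity). *)
From HB Require Import structures.
From mathcomp Require Import all_boot all_algebra.
Set Implicit Arguments. Unset Strict Implicit. Unset Printing Implicit Defensive.
Import GRing.Theory Num.Theory.
Local Open Scope ring_scope.

Definition arr3 (n1 n2 n3 : nat) := 'I_n1 -> 'I_n2 -> 'I_n3 -> bool.

Definition pt3 := (int * int * int)%type.

Definition is_perm_array3 n1 n2 n3 (A : arr3 n1 n2 n3) : Prop :=
  (exists phi : 'I_n1 * 'I_n2 -> 'I_n3,
      bijective phi /\ forall a1 a2 a3, A a1 a2 a3 = (phi (a1, a2) == a3))
  \/ (exists phi : 'I_n1 -> 'I_n2 * 'I_n3,
      bijective phi /\ forall a1 a2 a3, A a1 a2 a3 = (phi a1 == (a2, a3))).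

Definition is_dot n1 n2 n3 (A : arr3 n1 n2 n3) (p : 'I_n1 * 'I_n2 * 'I_n3) : bool :=
  A p.1.1 p.1.2 p.2.

Definition order3 n1 n2 n3 (A : arr3 n1 n2 n3) : nat :=
  #|[set p : 'I_n1 * 'I_n2 * 'I_n3 | is_dot A p]|.

Definition emb3 n1 n2 n3 (p : 'I_n1 * 'I_n2 * 'I_n3) : pt3 :=
  ((p.1.1 : nat)%:Z, (p.1.2 : nat)%:Z, (p.2 : nat)%:Z).

Definition diff3 (a w : pt3) : pt3 :=
  (w.1.1 - a.1.1, w.1.2 - a.1.2, w.2 - a.2).

Definition is_costas3 n1 n2 n3 (A : arr3 n1 n2 n3) : Prop :=
  is_perm_array3 A /\
  forall p q p' q' : 'I_n1 * 'I_n2 * 'I_n3,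
    is_dot A p -> is_dot A q -> is_dot A p' -> is_dot A q' ->
    p <> q -> p' <> q' ->
    diff3 (emb3 p) (emb3 q) = diff3 (emb3 p') (emb3 q') ->
    (p, q) = (p', q').

Definition per_ext n1 n2 n3 (A : arr3 n1 n2 n3) (x : pt3) : bool :=
  [exists a : 'I_n1 * 'I_n2 * 'I_n3,
    [&& ((a.1.1 : nat)%:Z == x.1.1 %[mod (n1 : nat)%:Z])%Z,
        ((a.1.2 : nat)%:Z == x.1.2 %[mod (n2 : nat)%:Z])%Z,
        ((a.2 : nat)%:Z == x.2 %[mod (n3 : nat)%:Z])%Z & is_dot A a]].

Definition in_box (n1 n2 n3 : nat) (k x : pt3) : bool :=
  [&& k.1.1 <= x.1.1 <= k.1.1 + (n1 : nat)%:Z - 1,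
      k.1.2 <= x.1.2 <= k.1.2 + (n2 : nat)%:Z - 1 &
      k.2 <= x.2 <= k.2 + (n3 : nat)%:Z - 1].

Definition is_periodic_costas3 n1 n2 n3 (A : arr3 n1 n2 n3) : Prop :=
  is_costas3 A /\
  forall (k : pt3) (x y x' y' : pt3),
    in_box n1 n2 n3 k x -> in_box n1 n2 n3 k y ->
    in_box n1 n2 n3 k x' -> in_box n1 n2 n3 k y' ->
    per_ext A x -> per_ext A y -> per_ext A x' -> per_ext A y' ->
    x <> y -> x' <> y' ->
    diff3 x y = diff3 x' y' ->
    (x, y) = (x', y').

From mathcomp Require Import all_boot all_algebra zify.
Import GRing.Theory Num.Theory.
Local Open Scope ring_scope.
Set Implicit Arguments. Unset Strict Implicit. Unset Printing Implicit Defensive.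

(* A periodic Costas array is the graph of a bijection [n1] x [n2] -> [n3] or
   [n1] -> [n2] x [n3]; say the former, with n1 >= 3.  For each cell c of the
   domain look at the dots above c and above its cyclic successor c + e1.  Their
   third coordinates differ, so the n1 n2 = n3 differences modulo n3 take at
   most n3 - 1 values, and two cells c <> c' give the same difference.  As
   n1 >= 3 the two pairs are not swapped copies of each other, so suitable
   periodic translates of the four dots fit in one period box with equal
   difference vectors, which periodic Costas forbids.  Hence every side of the
   domain has length 2 and the order, the size of the domain, is 4. *)

Definition eqmodz (m : nat) (a b : int) : Prop := (a == b %[mod m%:Z])%Z.

Lemma eqmodzP m a b : eqmodz m a b <-> exists k : int, a = b + k * m%:Z.
Proof.
rewrite /eqmodz eqz_mod_dvd; split.
  by move/dvdzP=> [k hk]; exists k; rewrite -hk addrC subrK.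
by move=> [k ->]; apply/dvdzP; exists k; rewrite addrC addKr.
Qed.

Lemma eqmodz_sym m a b : eqmodz m a b -> eqmodz m b a.
Proof. by rewrite /eqmodz eq_sym. Qed.

Lemma eqmodz_trans m a b c : eqmodz m a b -> eqmodz m b c -> eqmodz m a c.
Proof. by rewrite /eqmodz => /eqP-> /eqP->. Qed.

Lemma eqmodz_ord m (i j : 'I_m) : eqmodz m i j -> i = j.
Proof.
rewrite /eqmodz !modz_small; first by move/eqP=> [] /ord_inj.
- by have := ltn_ord j; lia.
- by have := ltn_ord i; lia.
Qed.

Lemma eqmodz_ordS p (i : 'I_p) : eqmodz p (ordS i) (i%:Z + 1).
Proof.
apply/eqmodzP; have := ltn_ord i; rewrite /=.
have [lt _|ge lt] := ltnP i.+1 p; first by rewrite modn_small //; exists 0; lia.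
have -> : i.+1 = p by lia.
by rewrite modnn; exists (-1); lia.
Qed.

Lemma eqmodz_addr_small m a (d : nat) : (0 < d < m)%N -> ~ eqmodz m a (a + d%:Z).
Proof.
case/andP=> d0 dm; rewrite /eqmodz eqz_mod_dvd dvdzE opprD addNKr abszN absz_nat.
by move/(dvdn_leq d0); lia.
Qed.

Lemma ordS_neq p (i : 'I_p) : (2 <= p)%N -> ordS i != i.
Proof.
move=> p2; apply/eqP=> E; have := eqmodz_ordS i; rewrite E.
by apply/eqmodz_addr_small; lia.
Qed.

Lemma ordS2_neq p (i : 'I_p) : (3 <= p)%N -> ordS (ordS i) != i.
Proof.
move=> p3; apply/eqP=> E.
have /eqmodzP [k hk] := eqmodz_ordS (ordS i).
have /eqmodzP [l hl] := eqmodz_ordS i.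
apply: (@eqmodz_addr_small p i 2); first lia.
by apply/eqmodzP; exists (k + l); rewrite E in hk; nia.
Qed.

Definition compatible m (a b a' b' : 'I_m) : Prop :=
  eqmodz m (b%:Z - a%:Z) (b'%:Z - a'%:Z) /\ (a = b \/ ~ (a' = b /\ b' = a)).

Definition in_window (m : nat) (k x : int) : bool := k <= x <= k + m%:Z - 1.

(* Relative to a, the residues of b, a', b' are d, u and u + d, where
   d = (b - a) %% m and u = (a' - a) %% m.  Split on u + d < m, u + d > m and
   u + d = m; in the last case the pairs can only fail to fit in one window
   when 2 d = m, i.e. when they are swapped. *)
Lemma window_lift m (a b a' b' : 'I_m) : compatible a b a' b' ->
  exists k (X Y X' Y' : int),
    [/\ eqmodz m X a, eqmodz m Y b, eqmodz m X' a', eqmodz m Y' b' &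
        [/\ Y - X = Y' - X', in_window m k X, in_window m k Y,
            in_window m k X' & in_window m k Y']].
Proof.
move=> [/eqmodzP [k3 h3] hb]; rewrite /in_window.
set x : int := a%:Z; set M : int := m%:Z.
have M0 : 0 < M by have := ltn_ord a; rewrite /M; lia.
set u := ((a'%:Z - x) %% M)%Z.
have u0 : 0 <= u by apply: modz_ge0; lia.
have u1 : u < M by apply: ltz_pmod.
have hu := divz_eq (a'%:Z - x) M; set q2 := ((a'%:Z - x) %/ M)%Z in hu.
set d := ((b%:Z - x) %% M)%Z.
have d0 : 0 <= d by apply: modz_ge0; lia.
have d1 : d < M by apply: ltz_pmod.
have hd := divz_eq (b%:Z - x) M; set q1 := ((b%:Z - x) %/ M)%Z in hd.
case: hb => [eq_ab | not_swapped].
  have xb : x = b by rewrite /x eq_ab.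
  exists x, x, x, (x + u), (x + u); split; try apply/eqmodzP.
  - by exists 0; lia.
  - by exists 0; lia.
  - by exists (- q2); lia.
  - by exists (k3 - q2); lia.
  - by split; lia.
have [small|not_small] := lerP (u + d) (M - 1).
  exists x, x, (x + d), (x + u), (x + u + d); split; try apply/eqmodzP.
  - by exists 0; lia.
  - by exists (- q1); lia.
  - by exists (- q2); lia.
  - by exists (k3 - q1 - q2); lia.
  - by split; lia.
have [large|not_large] := lerP (M + 1) (u + d).
  exists (x + u + d - 2 * M), x, (x + d - M), (x + u - M), (x + u + d - 2 * M).
  split; try apply/eqmodzP.
  - by exists 0; lia.
  - by exists (- q1 - 1); lia.
  - by exists (- q2 - 1); lia.
  - by exists (k3 - q1 - q2 - 2); lia.
  - by split; lia.
have [short|not_short] := lerP (2 * d) (M - 1).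
  exists (x - d), x, (x + d), (x - d), x; split; try apply/eqmodzP.
  - by exists 0; lia.
  - by exists (- q1); lia.
  - by exists (- q2 - 1); lia.
  - by exists (k3 - q1 - q2 - 1); lia.
  - by split; lia.
have [long|not_long] := lerP (M + 1) (2 * d).
  exists (x - u), x, (x - u), (x + u), x; split; try apply/eqmodzP.
  - by exists 0; lia.
  - by exists (- q1 - 1); lia.
  - by exists (- q2); lia.
  - by exists (k3 - q1 - q2 - 1); lia.
  - by split; lia.
exfalso; apply: not_swapped; split; apply/eqmodz_ord/eqmodzP.
  by exists (q2 - q1); lia.
by exists (q1 + q2 + 1 - k3); lia.
Qed.

Section PeriodicCostas.

Variables (n1 n2 n3 : nat) (A : arr3 n1 n2 n3).

Definition represents (X : pt3) (P : 'I_n1 * 'I_n2 * 'I_n3) : Prop :=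
  [/\ eqmodz n1 X.1.1 P.1.1, eqmodz n2 X.1.2 P.1.2 & eqmodz n3 X.2 P.2].

Lemma represents_inj X P Q : represents X P -> represents X Q -> P = Q.
Proof.
case: P Q => [[p1 p2] p3] [[q1 q2] q3] [/= hp1 hp2 hp3] [/= hq1 hq2 hq3].
have e (m : nat) (i j : 'I_m) x : eqmodz m x i -> eqmodz m x j -> i = j.
  by move=> /eqmodz_sym hi hj; apply/eqmodz_ord/(eqmodz_trans hi).
by rewrite (e _ _ _ _ hp1 hq1) (e _ _ _ _ hp2 hq2) (e _ _ _ _ hp3 hq3).
Qed.

Lemma per_ext_represents X P : is_dot A P -> represents X P -> per_ext A X.
Proof.
move=> dotP [h1 h2 h3]; apply/existsP; exists P.
by rewrite dotP andbT; apply/and3P; split; apply: eqmodz_sym.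
Qed.

Lemma periodic_costas_compatible (P Q P' Q' : 'I_n1 * 'I_n2 * 'I_n3) :
  is_periodic_costas3 A ->
  is_dot A P -> is_dot A Q -> is_dot A P' -> is_dot A Q' -> P != Q ->
  compatible P.1.1 Q.1.1 P'.1.1 Q'.1.1 -> compatible P.1.2 Q.1.2 P'.1.2 Q'.1.2 ->
  compatible P.2 Q.2 P'.2 Q'.2 ->
  P = P' /\ Q = Q'.
Proof.
move=> [_ box] dP dQ dP' dQ' /eqP PQ.
move=> /window_lift [k1 [X1 [Y1 [X1' [Y1' [x1 y1 x1' y1' [e1 wx1 wy1 wx1' wy1']]]]]]].
move=> /window_lift [k2 [X2 [Y2 [X2' [Y2' [x2 y2 x2' y2' [e2 wx2 wy2 wx2' wy2']]]]]]].
move=> /window_lift [k3 [X3 [Y3 [X3' [Y3' [x3 y3 x3' y3' [e3 wx3 wy3 wx3' wy3']]]]]]].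
have rX : represents (X1, X2, X3) P by [].
have rY : represents (Y1, Y2, Y3) Q by [].
have rX' : represents (X1', X2', X3') P' by [].
have rY' : represents (Y1', Y2', Y3') Q' by [].
have XY : (X1, X2, X3) <> (Y1, Y2, Y3).
  by move=> E; apply: PQ; rewrite E in rX; exact: represents_inj rX rY.
have XY' : (X1', X2', X3') <> (Y1', Y2', Y3').
  have diff0 (x y x' y' : int) : y - x = y' - x' -> x' = y' -> x = y.
    by move=> e ex; rewrite ex subrr in e; apply/eqP; rewrite eq_sym -subr_eq0 e.
  case=> /(diff0 _ _ _ _ e1) E1 /(diff0 _ _ _ _ e2) E2 /(diff0 _ _ _ _ e3) E3.
  by apply: XY; rewrite E1 E2 E3.
have inbox (Z : pt3) : in_window n1 k1 Z.1.1 -> in_window n2 k2 Z.1.2 ->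
    in_window n3 k3 Z.2 -> in_box n1 n2 n3 (k1, k2, k3) Z.
  by move=> *; apply/and3P.
have := box (k1, k2, k3) _ _ _ _ (inbox (X1, X2, X3) wx1 wx2 wx3)
  (inbox (Y1, Y2, Y3) wy1 wy2 wy3) (inbox (X1', X2', X3') wx1' wx2' wx3')
  (inbox (Y1', Y2', Y3') wy1' wy2' wy3')
  (per_ext_represents dP rX) (per_ext_represents dQ rY)
  (per_ext_represents dP' rX') (per_ext_represents dQ' rY') XY XY'.
rewrite /diff3 /= e1 e2 e3 => /(_ erefl) E.
move: rX' rY'; case: E => <- <- <- <- <- <- rX' rY'.
by split; [apply: represents_inj rX rX' | apply: represents_inj rY rY'].
Qed.

End PeriodicCostas.

Lemma compatible_refl m (a a' : 'I_m) : compatible a a a' a'.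
Proof. by split; [apply/eqmodzP; exists 0; lia | left]. Qed.

Lemma compatible_ordS p (a a' : 'I_p) : (3 <= p)%N -> compatible a (ordS a) a' (ordS a').
Proof.
move=> p3; split.
  have /eqmodzP [k hk] := eqmodz_ordS a; have /eqmodzP [l hl] := eqmodz_ordS a'.
  by apply/eqmodzP; exists (k - l); rewrite hk hl; nia.
by right=> [[E1 E2]]; have := ordS2_neq a p3; rewrite -E1 E2 eqxx.
Qed.

Definition shift1 p q (c : 'I_p * 'I_q) : 'I_p * 'I_q := (ordS c.1, c.2).

Lemma exists_compatible_shift p q N (f : 'I_p * 'I_q -> 'I_N) :
  (3 <= p)%N -> (0 < q)%N -> (N <= p * q)%N -> injective f ->
  exists c c', c != c' /\ compatible (f c) (f (shift1 c)) (f c') (f (shift1 c')).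
Proof.
move=> p3 q0 Nle finj.
have p0 : (0 < p)%N by lia.
have N0 : (0 < N)%N by have := ltn_ord (f (Ordinal p0, Ordinal q0)); lia.
pose delta c : 'I_N := Ordinal (ltn_pmod (f (shift1 c) + N - f c) N0).
have delta_eqmod c : eqmodz N (delta c) ((f (shift1 c))%:Z - (f c)%:Z).
  rewrite /eqmodz /= -modz_nat modz_mod.
  have -> : ((f (shift1 c) + N - f c)%N : int) = (f (shift1 c))%:Z - (f c)%:Z + N%:Z.
    by have := ltn_ord (f c); lia.
  by rewrite modzDr.
have delta_neq0 c : delta c != Ordinal N0.
  apply/eqP=> E; have /eqmodzP [k hk] := delta_eqmod c; rewrite E /= in hk.
  have /finj/(congr1 fst)/eqP : f (shift1 c) = f c.
    by apply/eqmodz_ord/eqmodzP; exists (- k); lia.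
  by apply/negP/ordS_neq; lia.
have [c [c' ne E]] : exists c, exists2 c', c != c' & delta c = delta c'.
  apply/injectivePn/injectiveP => delta_inj.
  have [|c Ec] := codomP (inj_card_onto delta_inj _ (Ordinal N0)).
    by rewrite card_prod !card_ord.
  by have := delta_neq0 c; rewrite -Ec eqxx.
exists c, c'; split => //; split.
  by apply: eqmodz_trans (eqmodz_sym (delta_eqmod c)) _; rewrite E; apply: delta_eqmod.
right=> [[/finj E1 /finj E2]]; have := ordS2_neq c.1 p3.
by move: E2; rewrite E1 => /(congr1 fst) /= ->; rewrite eqxx.
Qed.

Section Dimensions.

Variables (n1 n2 n3 : nat) (A : arr3 n1 n2 n3).
Hypothesis A_periodic : is_periodic_costas3 A.

Lemma periodic_costas_no_long_shift p q N (f : 'I_p * 'I_q -> 'I_N)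
    (g1 : 'I_p * 'I_q -> 'I_n1) (g2 : 'I_p * 'I_q -> 'I_n2) (g3 : 'I_p * 'I_q -> 'I_n3) :
  (3 <= p)%N -> (0 < q)%N -> (N <= p * q)%N -> injective f ->
  (forall c, is_dot A (g1 c, g2 c, g3 c)) ->
  injective (fun c => (g1 c, g2 c, g3 c)) ->
  (forall c c', compatible (f c) (f (shift1 c)) (f c') (f (shift1 c')) ->
     [/\ compatible (g1 c) (g1 (shift1 c)) (g1 c') (g1 (shift1 c')),
         compatible (g2 c) (g2 (shift1 c)) (g2 c') (g2 (shift1 c')) &
         compatible (g3 c) (g3 (shift1 c)) (g3 c') (g3 (shift1 c'))]) ->
  False.
Proof.
move=> p3 q0 Nle finj dots ginj gcomp.
have [c [c' [ne /gcomp [h1 h2 h3]]]] := exists_compatible_shift p3 q0 Nle finj.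
have moved : (g1 c, g2 c, g3 c) != (g1 (shift1 c), g2 (shift1 c), g3 (shift1 c)).
  apply/eqP=> /(ginj c) /(congr1 fst) /= E.
  by have := ordS_neq c.1 (ltnW p3); rewrite -E eqxx.
have [/(ginj c) E _] := periodic_costas_compatible A_periodic (dots c) (dots (shift1 c))
  (dots c') (dots (shift1 c')) moved h1 h2 h3.
by rewrite E eqxx in ne.
Qed.

Lemma order3_codom (T : finType) (h : T -> 'I_n1 * 'I_n2 * 'I_n3) :
  injective h -> (forall P, is_dot A P = (P \in codom h)) -> order3 A = #|T|.
Proof.
by move=> hinj dotsE; rewrite /order3 -(card_codom hinj); apply: eq_card => P; rewrite inE.
Qed.

Section Graph12.

Variable phi : 'I_n1 * 'I_n2 -> 'I_n3.
Hypotheses (phi_bij : bijective phi) (A_phi : forall a1 a2 a3, A a1 a2 a3 = (phi (a1, a2) == a3)).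

Lemma order3_graph12 : order3 A = (n1 * n2)%N.
Proof.
have -> : (n1 * n2)%N = #|{: 'I_n1 * 'I_n2}| by rewrite card_prod !card_ord.
apply: (order3_codom (h := fun c => (c.1, c.2, phi c))) => [[a b] [a' b'] [-> ->] //|].
case=> [[a b] z]; rewrite /is_dot A_phi /=.
by apply/eqP/codomP => [<-|[[a' b'] [-> -> ->]]]; first exists (a, b).
Qed.

Lemma dims_graph12 : (2 <= n1)%N -> (2 <= n2)%N -> n1 = 2 /\ n2 = 2.
Proof.
move=> n1_2 n2_2.
have card : n3 = (n1 * n2)%N by have := bij_eq_card phi_bij; rewrite card_prod !card_ord.
have phi_inj := bij_inj phi_bij.
split; apply/eqP; rewrite eqn_leq ?n1_2 ?n2_2 andbT leqNgt; apply/negP => big.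
- apply: (periodic_costas_no_long_shift (f := phi) (g1 := fst) (g2 := snd) (g3 := phi))
    (big) (ltnW n2_2) (eq_leq card) (phi_inj) _ _ _.
  + by case=> a b; rewrite /is_dot A_phi.
  + by move=> c c' [_ _ /phi_inj].
  + by move=> c c' h; split=> //; [exact: compatible_ordS _ _ big | exact: compatible_refl].
- pose f (c : 'I_n2 * 'I_n1) := phi (c.2, c.1).
  have f_inj : injective f by move=> [a b] [a' b'] /phi_inj [-> ->].
  apply: (periodic_costas_no_long_shift (f := f) (g1 := snd) (g2 := fst) (g3 := f))
    (big) (ltnW n1_2) _ (f_inj) _ _ _; first by rewrite mulnC card.
  + by case=> a b; rewrite /is_dot A_phi.
  + by move=> c c' [_ _ /f_inj].
  + by move=> c c' h; split=> //; [exact: compatible_refl | exact: compatible_ordS _ _ big].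
Qed.

End Graph12.

Section Graph1_23.

Variable phi : 'I_n1 -> 'I_n2 * 'I_n3.
Hypotheses (phi_bij : bijective phi) (A_phi : forall a1 a2 a3, A a1 a2 a3 = (phi a1 == (a2, a3))).

Let card_n1 : n1 = (n2 * n3)%N.
Proof. by have := bij_eq_card phi_bij; rewrite card_prod !card_ord. Qed.

Lemma order3_graph1_23 : order3 A = (n2 * n3)%N.
Proof.
rewrite -card_n1 -[X in _ = X]card_ord.
apply: (order3_codom (h := fun a => (a, (phi a).1, (phi a).2))) => [a a' [] //|].
case=> [[a b] z]; rewrite /is_dot A_phi /=.
by apply/eqP/codomP => [E|[a' [-> -> ->]]]; [exists a; rewrite E | case: (phi a')].
Qed.

Lemma dims_graph1_23 : (2 <= n2)%N -> (2 <= n3)%N -> n2 = 2 /\ n3 = 2.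
Proof.
move=> n2_2 n3_2; case: phi_bij => psi _ psiK.
have psi_inj := can_inj psiK.
split; apply/eqP; rewrite eqn_leq ?n2_2 ?n3_2 andbT leqNgt; apply/negP => big.
- apply: (periodic_costas_no_long_shift (f := psi) (g1 := psi) (g2 := fst) (g3 := snd))
    (big) (ltnW n3_2) (eq_leq card_n1) (psi_inj) _ _ _.
  + by case=> b c; rewrite /is_dot A_phi /= psiK.
  + by move=> c c' [/psi_inj].
  + by move=> c c' h; split=> //; [exact: compatible_ordS _ _ big | exact: compatible_refl].
- pose f (c : 'I_n3 * 'I_n2) := psi (c.2, c.1).
  have f_inj : injective f by move=> [a b] [a' b'] /psi_inj [-> ->].
  apply: (periodic_costas_no_long_shift (f := f) (g1 := f) (g2 := snd) (g3 := fst))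
    (big) (ltnW n2_2) _ (f_inj) _ _ _; first by rewrite mulnC -card_n1.
  + by case=> c b; rewrite /is_dot A_phi /= psiK.
  + by move=> c c' [/f_inj].
  + by move=> c c' h; split=> //; [exact: compatible_refl | exact: compatible_ordS _ _ big].
Qed.

End Graph1_23.

End Dimensions.

Theorem mainTheorem12 (n1 n2 n3 : nat) (A : arr3 n1 n2 n3) :
  (2 <= n1)%N -> (2 <= n2)%N -> (2 <= n3)%N ->
  is_periodic_costas3 A -> order3 A = 4%N.
Proof.
move=> n1_2 n2_2 n3_2 A_periodic.
case: (A_periodic) => [[[[phi [phi_bij A_phi]] | [phi [phi_bij A_phi]]] _] _].
- rewrite (order3_graph12 A_phi).
  by have [-> ->] := dims_graph12 A_periodic phi_bij A_phi n1_2 n2_2.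
- rewrite (order3_graph1_23 phi_bij A_phi).
  by have [-> ->] := dims_graph1_23 A_periodic phi_bij A_phi n2_2 n3_2.
Qed.
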